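(* Let $f_1,f_2:\mathbb R^d\to\mathbb R$ be convex with $\nabla f_i$ globally Lipschitz continuous with modulus $L_i>0$ ($i=1,2$), let $f_3:\mathbb R^d\to\mathbb R\cup\{+\infty\}$ be proper and lower semicontinuous, and assume $\varphi:=f_1+f_2+f_3$ has a nonempty set of minimizers. Let $\lambda\in(0,2)$, $\underline\alpha:=\frac{2\lambda-3+\sqrt{9-4\lambda}}{2}$, $\alpha\in(\underline\alpha,1)$, and let $\gamma\in\Gamma$. Then for the sequences $(z_1^k,z_2^k)_k$ generated by the relaxed Ryu splitting method there exists $M=M(\gamma)>0$ such that for all $k\ge0$, $$\varphi_\gamma^{\mathrm{Ryu}}(z_1^k,z_2^k)\ge\varphi_\gamma^{\mathrm{Ryu}}(z_1^{k+1},z_2^{k+1})+M\big(\|z_1^{k+1}-z_1^k\|^2+\|z_2^{k+1}-z_2^k\|^2\big).$$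
   Context: For $h:\mathbb R^d\to\mathbb R\cup\{+\infty\}$ and $\gamma>0$, $\mathrm{prox}_{\gamma h}(z):=\operatorname{argmin}_{y}\{h(y)+\frac{1}{2\gamma}\|y-z\|^2\}$. The relaxed Ryu splitting method: given $z_1^0,z_2^0\in\mathbb R^d$, for $k\ge0$, $x_1^k=\mathrm{prox}_{\gamma f_1}(z_1^k)$, $x_2^k=\mathrm{prox}_{\frac{\gamma}{\alpha}f_2}(\frac{z_2^k}{\alpha}+x_1^k)$, $x_3^k\in\mathrm{prox}_{\gamma f_3}(x_1^k-z_1^k+x_2^k-z_2^k)$, $z_1^{k+1}=z_1^k+\lambda(x_3^k-x_1^k)$, $z_2^{k+1}=z_2^k+\lambda(x_3^k-x_2^k)$. Relaxed Ryu envelope: with $\gamma_1=\gamma/\alpha$, $\gamma_2=\gamma/(1-\alpha)$, and for $(z_1,z_2)$, $x_1=\mathrm{prox}_{\gamma f_1}(z_1)$, $x_2=\mathrm{prox}_{\frac{\gamma}{\alpha}f_2}(\frac{z_2}{\alpha}+x_1)$, $\varphi_\gamma^{\mathrm{Ryu}}(z_1,z_2):=\min_{y}\{f_3(y)+\sum_{i=1}^2[f_i(x_i)+\langle y-x_i,\nabla f_i(x_i)\rangle+\frac{1}{2\gamma_i}\|y-x_i\|^2]\}$. Stepsize set: fix $\epsilon_1\in I_1:=\big(\frac{\alpha}{2\alpha-\lambda},\frac{2-\lambda}{1-\alpha}\big)$ and $\epsilon_2\in I_2:=\big(\frac{\alpha L_2}{\lambda},+\infty\big)$, and set $\bar\gamma_0:=\frac{\lambda}{2L_1}$,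 $\bar\gamma_1:=\frac{\lambda}{2L_2}-\frac{\alpha}{2\epsilon_2}$, $\bar\gamma_2:=\frac{\alpha(2-\lambda-(1-\alpha)\epsilon_1)}{\alpha\epsilon_2+2(1-\alpha)L_1}$, $\bar\gamma_3:=\frac{(1-\alpha)(\epsilon_1(2\alpha-\lambda)-\alpha)}{2\alpha L_2\epsilon_1}$, and $\Gamma:=(0,\min\{\bar\gamma_0,\bar\gamma_1\}]\cap\big(0,\min\{\bar\gamma_2,\bar\gamma_3,\frac{1}{L_1+L_2}\}\big)$. *)

From HB Require Import structures.
From mathcomp Require Import all_boot all_order all_algebra.
From mathcomp Require Import all_classical all_reals all_analysis.
Set Implicit Arguments. Unset Strict Implicit. Unset Printing Implicit Defensive.
Import Order.TTheory GRing.Theory Num.Theory.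
Import numFieldNormedType.Exports.
Local Open Scope classical_set_scope.
Local Open Scope ring_scope.

Section Defs.
Variables (R : realType) (d : nat).
Notation vec := 'rV[R]_d.

Definition dotv (u v : vec) : R := \sum_(i < d) u ord0 i * v ord0 i.
Definition sqnorm (u : vec) : R := dotv u u.
Definition enorm (u : vec) : R := Num.sqrt (sqnorm u).

Definition convex_fun (f : vec -> R) : Prop :=
  forall (x y : vec) (t : R), 0 <= t <= 1 ->
    f (t *: x + (1 - t) *: y) <= t * f x + (1 - t) * f y.

Definition is_gradient (f : vec -> R) (g : vec -> vec) : Prop :=
  forall x : vec, differentiable f x /\
    (('d f x : vec -> R) = fun h => dotv (g x) h).

Definition lipschitz_mod (g : vec -> vec) (L : R) : Prop :=
  forall x y : vec, enorm (g x - g y) <= L * enorm (x - y).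

Definition proper_fun (f : vec -> \bar R) : Prop :=
  (forall x, f x != -oo%E) /\ (exists x, f x != +oo%E).

Definition prox (h : vec -> \bar R) (gam : R) (z : vec) : set vec :=
  [set y | forall w : vec,
     (h y + (sqnorm (y - z) / (2 * gam))%:E <= h w + (sqnorm (w - z) / (2 * gam))%:E)%E].

(* For the single-valued proxes of f1, f2 (unique minimizer): a chosen element *)
Definition prox_pt (h : vec -> R) (gam : R) (z : vec) : vec :=
  xget z (prox (fun x => (h x)%:E) gam z).

(* relaxed Ryu envelope (the "min" is written as an infimum over y) *)
Definition ryu_env (f1 f2 : vec -> R) (f3 : vec -> \bar R) (g1 g2 : vec -> vec)
    (gam alpha : R) (z1 z2 : vec) : \bar R :=
  let gam1 := gam / alpha in
  let gam2 := gam / (1 - alpha) in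
  let x1 := prox_pt f1 gam z1 in
  let x2 := prox_pt f2 (gam / alpha) (alpha^-1 *: z2 + x1) in
  ereal_inf [set (f3 y
      + (f1 x1 + dotv (y - x1) (g1 x1) + sqnorm (y - x1) / (2 * gam1)
       + (f2 x2 + dotv (y - x2) (g2 x2) + sqnorm (y - x2) / (2 * gam2)))%:E)%E
    | y in [set: vec]].

Definition stepsize_set (L1 L2 lam alpha eps1 eps2 : R) : set R :=
  let g0 := lam / (2 * L1) in
  let g1 := lam / (2 * L2) - alpha / (2 * eps2) in
  let g2 := alpha * (2 - lam - (1 - alpha) * eps1) /
            (alpha * eps2 + 2 * (1 - alpha) * L1) in
  let g3 := (1 - alpha) * (eps1 * (2 * alpha - lam) - alpha) /
            (2 * alpha * L2 * eps1) in
  [set gam | 0 < gam /\ gam <= Num.min g0 g1 /\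
             gam < Num.min (Num.min g2 g3) (1 / (L1 + L2))].

End Defs.

From HB Require Import structures.
From mathcomp Require Import all_boot all_order all_algebra.
From mathcomp Require Import all_classical all_reals all_analysis.
From mathcomp Require Import ring lra.
Import Order.TTheory GRing.Theory Num.Theory.
Import numFieldNormedType.Exports.
Local Open Scope classical_set_scope.
Local Open Scope ring_scope.
Set Implicit Arguments. Unset Strict Implicit.

(* Let x1, x2 be the proximal points at (z1, z2) and w = x1 - z1 + x2 - z2.
   The function minimized in the envelope is f3 plus a quadratic model in y whose
   y-dependence equals that of |y - w|^2 / (2 gam), so the infimum is attained at
   x3 in prox_{gam f3}(w).  At the next iterate the envelope is at most the value of its
   own model at the same point x3, and the two models are compared using, for each
   smooth f_i, the sharpened gradient inequality
     f x + <grad f x, y - x> + |grad f y - grad f x|^2 / (2 L) <= f y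
   together with two Young inequalities.  The stepsize conditions make the resulting
   coefficients of |x1' - x1|^2 and |x2' - x2|^2 positive, and |z' - z|^2 is at most
   a constant times |x' - x|^2. *)

Section InnerProduct.
Variables (R : realType) (d : nat).
Implicit Types u v w : 'rV[R]_d.

Lemma dotvC u v : dotv u v = dotv v u.
Proof. by apply: eq_bigr => i _; rewrite mulrC. Qed.

Lemma dotvDl u v w : dotv (u + v) w = dotv u w + dotv v w.
Proof. by rewrite /dotv -big_split; apply: eq_bigr => i _; rewrite !mxE mulrDl. Qed.

Lemma dotvZl (a : R) u v : dotv (a *: u) v = a * dotv u v.
Proof. by rewrite /dotv mulr_sumr; apply: eq_bigr => i _; rewrite !mxE mulrA. Qed.

Lemma dotvNl u v : dotv (- u) v = - dotv u v.
Proof. by rewrite -scaleN1r dotvZl mulN1r. Qed.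

Lemma dotvBl u v w : dotv (u - v) w = dotv u w - dotv v w.
Proof. by rewrite dotvDl dotvNl. Qed.

Lemma dotvDr u v w : dotv w (u + v) = dotv w u + dotv w v.
Proof. by rewrite dotvC dotvDl !(dotvC w). Qed.

Lemma dotvZr (a : R) u v : dotv u (a *: v) = a * dotv u v.
Proof. by rewrite dotvC dotvZl dotvC. Qed.

Lemma dotvNr u v : dotv u (- v) = - dotv u v.
Proof. by rewrite dotvC dotvNl dotvC. Qed.

Lemma dotvBr u v w : dotv w (u - v) = dotv w u - dotv w v.
Proof. by rewrite dotvDr dotvNr. Qed.

Lemma sqnorm_ge0 u : 0 <= sqnorm u.
Proof. by apply: sumr_ge0 => i _; rewrite -expr2 sqr_ge0. Qed.

Lemma sqnorm_eq0 u : sqnorm u = 0 -> u = 0.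
Proof.
move=> /eqP; rewrite psumr_eq0 => [/allP u0|i _]; last by rewrite -expr2 sqr_ge0.
apply/rowP => i; move: (u0 i (mem_index_enum i)).
by rewrite mxE -expr2 sqrf_eq0 [ord0](ord1 0) => /eqP.
Qed.

Lemma dot0v v : dotv 0 v = 0.
Proof. by rewrite -(scale0r 0) dotvZl mul0r. Qed.

Lemma sqnormN u : sqnorm (- u) = sqnorm u.
Proof. by rewrite /sqnorm dotvNl dotvNr opprK. Qed.

Lemma sqnormZ (a : R) u : sqnorm (a *: u) = a ^+ 2 * sqnorm u.
Proof. by rewrite /sqnorm dotvZl dotvZr mulrA expr2. Qed.

Lemma sqnormD u v : sqnorm (u + v) = sqnorm u + 2 * dotv u v + sqnorm v.
Proof. by rewrite /sqnorm !(dotvDl, dotvDr) (dotvC v u); ring. Qed.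

Lemma sqnormB u v : sqnorm (u - v) = sqnorm u - 2 * dotv u v + sqnorm v.
Proof. by rewrite sqnormD sqnormN dotvNr mulrN. Qed.

Lemma sqnormD_le u v : sqnorm (u + v) <= 2 * sqnorm u + 2 * sqnorm v.
Proof. by have := sqnorm_ge0 (u - v); rewrite sqnormB sqnormD; lra. Qed.

Lemma young_dotv (e : R) u v : 0 < e -> 2 * dotv u v <= e * sqnorm u + sqnorm v / e.
Proof.
move=> e_gt0; rewrite -(ler_pM2l e_gt0) mulrDr mulrA (mulrCA e _ e^-1) mulfV ?gt_eqF //.
by have := sqnorm_ge0 (e *: u - v); rewrite sqnormB sqnormZ dotvZl; lra.
Qed.

Lemma enorm_ge0 u : 0 <= enorm u.
Proof. exact: sqrtr_ge0. Qed.

Lemma sqr_enorm u : enorm u ^+ 2 = sqnorm u.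
Proof. by rewrite sqr_sqrtr // sqnorm_ge0. Qed.

Lemma enorm_eq0 u : enorm u = 0 -> u = 0.
Proof. by move=> u0; apply: sqnorm_eq0; rewrite -sqr_enorm u0 expr0n. Qed.

Lemma enormZ (a : R) u : enorm (a *: u) = `|a| * enorm u.
Proof. by rewrite /enorm sqnormZ sqrtrM ?sqr_ge0 // sqrtr_sqr. Qed.

Lemma enormN u : enorm (- u) = enorm u.
Proof. by rewrite /enorm sqnormN. Qed.

Lemma dotv_le u v : dotv u v <= enorm u * enorm v.
Proof.
have := mulr_ge0 (enorm_ge0 u) (enorm_ge0 v).
rewrite le_eqVlt eq_sym mulf_eq0 => /orP[/orP[]/eqP/enorm_eq0 ->|uv_gt0].
- by rewrite dot0v mulr_ge0 ?enorm_ge0.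
- by rewrite dotvC dot0v mulr_ge0 ?enorm_ge0.
have := sqnorm_ge0 (enorm v *: u - enorm u *: v).
rewrite sqnormB !sqnormZ dotvZl dotvZr -!sqr_enorm => ge0.
have : 0 <= enorm u * enorm v * (enorm u * enorm v - dotv u v) by nra.
by rewrite pmulr_rge0 // subr_ge0.
Qed.

Lemma cauchy_schwarz u v : `|dotv u v| <= enorm u * enorm v.
Proof.
rewrite ler_norml dotv_le andbT lerNl -dotvNl.
by rewrite -[enorm u]enormN dotv_le.
Qed.

End InnerProduct.

Section RealLine.
Variable R : realType.

Lemma le0_small_mul (a K : R) : (forall t, 0 < t <= 1 -> a <= t * K) -> a <= 0.
Proof.
move=> small; rewrite leNgt; apply/negP => a_gt0.
have K_ge_a : a <= K by have := small 1; rewrite ltr01 lexx mul1r; apply.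
have K_gt0 : 0 < K by exact: lt_le_trans K_ge_a.
have t_gt0 : 0 < a / (2 * K) by rewrite divr_gt0 ?mulr_gt0.
have t_le1 : a / (2 * K) <= 1 by rewrite ler_pdivrMr ?mulr_gt0 //; lra.
have := small (a / (2 * K)); rewrite t_gt0 t_le1 => /(_ isT).
have -> : a / (2 * K) * K = a / 2 by field; rewrite gt_eqF.
lra.
Qed.

Lemma le_first_order (phi dphi : R -> R) (K : R) :
  (forall t : R, is_derive t 1 phi (dphi t)) ->
  (forall t, 0 < t < 1 -> dphi t <= dphi 0 + K * t) ->
  phi 1 <= phi 0 + dphi 0 + K / 2.
Proof.
move=> phi_deriv dphi_le.
pose psi := phi - (@id R * cst (dphi 0)) - (@id R ^+ 2 * cst (K / 2)).
have psi_deriv (t : R) : is_derive t 1 psi (dphi t - dphi 0 - t * K).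
  apply: is_derive_eq.
  rewrite !fctE !scaler0 !add0r expr1 /GRing.scale /= !mulr1.
  by field.
have psi_cont : {within `[0, 1], continuous psi}.
  by apply: derivable_within_continuous => t _; case: (psi_deriv t).
have [c] := MVT ltr01 (fun t _ => psi_deriv t) psi_cont.
rewrite in_itv /= => c01; rewrite /psi !fctE expr0n expr1n /=.
have := dphi_le c c01; lra.
Qed.

End RealLine.

Lemma grad_eq0_of_min (R : realType) (d : nat) (F : 'rV[R]_d -> R) (G x : 'rV[R]_d) (K : R) :
  (forall y, F y <= F x + dotv G (y - x) + K * sqnorm (y - x)) ->
  (forall y, F x <= F y) -> G = 0.
Proof.
move=> F_le F_min; apply: sqnorm_eq0; apply/eqP; rewrite eq_le sqnorm_ge0 andbT.
apply: (@le0_small_mul _ _ (K * sqnorm G)) => t /andP[t_gt0 _].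
have := le_trans (F_min (x - t *: G)) (F_le (x - t *: G)).
rewrite [x - _ - x]addrAC subrr add0r dotvNr dotvZr sqnormN sqnormZ -[dotv G G]/(sqnorm G).
rewrite expr2 => ge.
by rewrite -(ler_pM2l t_gt0); lra.
Qed.

Section SmoothConvex.
Variables (R : realType) (d : nat) (f : 'rV[R]_d -> R) (g : 'rV[R]_d -> 'rV[R]_d) (L : R).
Hypotheses (f_convex : convex_fun f) (f_grad : is_gradient f g).
Hypotheses (g_lip : lipschitz_mod g L) (L_gt0 : 0 < L).
Implicit Types x y z h : 'rV[R]_d.

Lemma is_derive_line x h (t : R) :
  is_derive t 1 (fun s : R => f (x + s *: h)) (dotv (g (x + t *: h)) h).
Proof.
have [f_diff fE] := f_grad (x + t *: h).
have line_diff : is_diff t (fun s : R => x + s *: h) ( *:%R^~ h).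
  by apply: is_diff_eq; rewrite add0r.
have comp_diff :
    is_diff t (f \o (fun s : R => x + s *: h)) ('d f (x + t *: h) \o ( *:%R^~ h)).
  exact: is_diff_comp.
apply: DeriveDef; first exact/derivable1_diffP.
by rewrite deriveE // diff_val /= scale1r fE.
Qed.

Lemma grad_line_lip x h (t : R) : 0 <= t ->
  `|dotv (g (x + t *: h) - g x) h| <= L * sqnorm h * t.
Proof.
move=> t_ge0; apply: le_trans (cauchy_schwarz _ _) _.
have := g_lip (x + t *: h) x; rewrite addrAC subrr add0r enormZ ger0_norm // => lip.
have := enorm_ge0 h; rewrite -sqr_enorm; nra.
Qed.

Lemma descent x y : f y <= f x + dotv (g x) (y - x) + L / 2 * sqnorm (y - x).
Proof.
have := le_first_order (K := L * sqnorm (y - x)) (is_derive_line x (y - x)).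
rewrite scale1r scale0r addr0 subrKC [L * _ / 2]mulrAC; apply=> t /andP[t_gt0 _].
by have := grad_line_lip x (y - x) (ltW t_gt0); rewrite ler_norml dotvBl; lra.
Qed.

Lemma descent_lower x y : f x + dotv (g x) (y - x) - L / 2 * sqnorm (y - x) <= f y.
Proof.
have := le_first_order (K := L * sqnorm (y - x))
  (fun t => is_deriveN (is_derive_line x (y - x) t)).
rewrite !fctE scale1r scale0r addr0 subrKC [L * _ / 2]mulrAC => le.
suff : - f y <= - f x - dotv (g x) (y - x) + L / 2 * sqnorm (y - x) by lra.
apply: le => t /andP[t_gt0 _].
by have := grad_line_lip x (y - x) (ltW t_gt0); rewrite ler_norml dotvBl; lra.
Qed.

Lemma convex_first_order x y : f x + dotv (g x) (y - x) <= f y.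
Proof.
suff : dotv (g x) (y - x) - (f y - f x) <= 0 by lra.
apply: (@le0_small_mul _ _ (L / 2 * sqnorm (y - x))) => t /andP[t_gt0 t_le1].
have t01 : 0 <= t <= 1 by rewrite (ltW t_gt0) t_le1.
have := f_convex y x t01.
have -> : t *: y + (1 - t) *: x = x + t *: (y - x).
  by rewrite scalerBl scale1r scalerBr addrCA addrA.
have := descent_lower x (x + t *: (y - x)).
rewrite [x + _ - x]addrC addKr dotvZr sqnormZ => low conv.
rewrite -(ler_pM2l t_gt0); rewrite expr2 in low; nra.
Qed.

Lemma cocoercive x y : f x + dotv (g x) (y - x) + sqnorm (g y - g x) / (2 * L) <= f y.
Proof.
set e := g y - g x; set w := y - L^-1 *: e.
have lower := convex_first_order x w.
have upper := descent y w.
rewrite [w - x]addrAC dotvBr dotvZr in lower.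
rewrite [w - y]addrAC subrr add0r dotvNr sqnormN sqnormZ dotvZr in upper.
have eE : L^-1 * sqnorm e = L^-1 * dotv (g y) e - L^-1 * dotv (g x) e.
  by rewrite -mulrBr /sqnorm {1}/e dotvBl.
have quad : L / 2 * (L^-1 ^+ 2 * sqnorm e) = L^-1 * sqnorm e / 2.
  by field; rewrite gt_eqF.
have -> : sqnorm e / (2 * L) = L^-1 * sqnorm e / 2 by field; rewrite gt_eqF.
lra.
Qed.

Lemma grad_monotone x y : 0 <= dotv (x - y) (g x - g y).
Proof.
have := convex_first_order x y; have := convex_first_order y x.
rewrite dotvBl !dotvBr !(dotvC _ (g _)); lra.
Qed.

Lemma sqnorm_lip x y : sqnorm (g x - g y) <= L ^+ 2 * sqnorm (x - y).
Proof.
rewrite -!sqr_enorm -exprMn ler_sqr ?nnegrE ?enorm_ge0 ?mulr_ge0 ?enorm_ge0 //.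
exact: ltW.
Qed.

Lemma dotv_grad_le x y : dotv (x - y) (g x - g y) <= L * sqnorm (x - y).
Proof.
apply: le_trans (ler_norm _) _; apply: le_trans (cauchy_schwarz _ _) _.
by have := g_lip x y; have := enorm_ge0 (x - y); rewrite -sqr_enorm; nra.
Qed.

Lemma prox_gradE (gam : R) z x : 0 < gam ->
  x \in prox (fun x => (f x)%:E) gam z -> z - x = gam *: g x.
Proof.
move=> gam_gt0 /set_mem x_min.
have : g x + gam^-1 *: (x - z) = 0.
  apply: (@grad_eq0_of_min _ _ (fun w => f w + sqnorm (w - z) / (2 * gam)) _ x
    (L / 2 + (2 * gam)^-1)) => [y|y]; last by have := x_min y; rewrite -!EFinD lee_fin.
  have -> : y - z = (x - z) + (y - x) by rewrite [RHS]addrC addrA subrK.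
  have -> : sqnorm (x - z + (y - x)) / (2 * gam) = sqnorm (x - z) / (2 * gam)
      + gam^-1 * dotv (x - z) (y - x) + (2 * gam)^-1 * sqnorm (y - x).
    by rewrite sqnormD; field; rewrite gt_eqF.
  rewrite (dotvDl (g x)) dotvZl.
  by have := descent x y; lra.
move=> /eqP; rewrite addr_eq0 => /eqP ->.
by rewrite -scalerN opprB scalerA mulfV ?gt_eqF // scale1r.
Qed.

Lemma prox_ptE (gam : R) z x : 0 < gam ->
  x \in prox (fun x => (f x)%:E) gam z -> prox_pt f gam z = x.
Proof.
move=> gam_gt0 x_prox; apply: xget_unique => [|y y_prox]; first exact: set_mem.
have yx : y - x = gam *: (g x - g y).
  rewrite scalerBr -(prox_gradE gam_gt0 x_prox) -(prox_gradE gam_gt0 (mem_set y_prox)).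
  by rewrite opprB [RHS]addrC addrA subrK.
have := grad_monotone y x; rewrite yx dotvZl -[g y - g x]opprB dotvNr.
have := sqnorm_ge0 (g x - g y); rewrite -/(sqnorm _) => sq_ge0 mono.
apply/eqP; rewrite -subr_eq0 yx (@sqnorm_eq0 _ _ (g x - g y)) ?scaler0 //; nra.
Qed.

Lemma linearization_sub_ge p q u :
  sqnorm (g q - g p) / (2 * L) - dotv (u - p) (g q - g p)
    <= (f p + dotv (u - p) (g p)) - (f q + dotv (u - q) (g q)).
Proof.
have -> : u - q = (u - p) + (p - q) by rewrite addrA subrK.
have := cocoercive q p; rewrite -[g p - g q]opprB sqnormN.
by rewrite (dotvDl (u - p)) (dotvBr (g q) (g p)) (dotvC (p - q)); lra.
Qed.

End SmoothConvex.

Lemma lam_lt_twice_alpha (R : realType) (lam al : R) : 0 < lam -> lam < 2 ->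
  (2 * lam - 3 + Num.sqrt (9 - 4 * lam)) / 2 < al -> lam < 2 * al.
Proof.
move=> lam_gt0 lam_lt2; rewrite ltr_pdivrMr //.
suff : 3 - lam < Num.sqrt (9 - 4 * lam) by lra.
rewrite -[3 - lam]ger0_norm ?subr_ge0 -?sqrtr_sqr ?ltr_sqrt; nra.
Qed.

Section RyuParameters.
Variables (R : realType) (L1 L2 lam al gam e1 e2 : R).
Hypotheses (L1_gt0 : 0 < L1) (L2_gt0 : 0 < L2) (lam_gt0 : 0 < lam).
Hypotheses (al_gt0 : 0 < al) (al_lt1 : al < 1) (gam_gt0 : 0 < gam).
Hypotheses (e1_gt0 : 0 < e1) (e2_gt0 : 0 < e2).

(* The coefficients of |x1' - x1|^2 and |x2' - x2|^2 in [kappa_bound]; [0 < kappa1] and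
   [0 < kappa2] are the conditions gam < g2 and gam < g3 of [stepsize_set]. *)
Definition kappa1 : R := al * (2 - lam) / (2 * gam) - (1 - al) * L1 - al * e2 / 2
  - (1 - al) * al * e1 / (2 * gam).
Definition kappa2 : R := (1 - al) * (e1 * (2 * al - lam) - al) / (2 * gam * e1) - al * L2.
Definition kappa_step : R := 6 + 2 * gam ^+ 2 * (L1 ^+ 2 + L2 ^+ 2).
Definition ryu_rate : R := Num.min kappa1 kappa2 / (lam * kappa_step).

Lemma kappa1_gt0 :
  gam < al * (2 - lam - (1 - al) * e1) / (al * e2 + 2 * (1 - al) * L1) -> 0 < kappa1.
Proof.
have den_gt0 : 0 < al * e2 + 2 * (1 - al) * L1.
  by rewrite ltr_wpDr ?mulr_gt0 // mulr_ge0 ?mulr_ge0 ?subr_ge0 ?ltW.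
rewrite ltr_pdivlMr // => gam_lt.
have -> : kappa1 = (al * (2 - lam - (1 - al) * e1) - gam * (al * e2 + 2 * (1 - al) * L1))
  / (2 * gam) by rewrite /kappa1; field; rewrite gt_eqF.
by rewrite divr_gt0 ?mulr_gt0 //; lra.
Qed.

Lemma kappa2_gt0 :
  gam < (1 - al) * (e1 * (2 * al - lam) - al) / (2 * al * L2 * e1) -> 0 < kappa2.
Proof.
have den_gt0 : 0 < 2 * al * L2 * e1 by rewrite !mulr_gt0.
rewrite ltr_pdivlMr // => gam_lt.
have -> : kappa2 = ((1 - al) * (e1 * (2 * al - lam) - al) - gam * (2 * al * L2 * e1))
  / (2 * gam * e1) by rewrite /kappa2; field; rewrite !gt_eqF.
by rewrite divr_gt0 ?mulr_gt0 //; lra.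
Qed.

Lemma kappa_step_gt0 : 0 < kappa_step.
Proof. by rewrite ltr_wpDr // mulr_ge0 ?addr_ge0 ?sqr_ge0 // mulr_ge0 ?sqr_ge0. Qed.

Lemma ryu_rate_gt0 : 0 < kappa1 -> 0 < kappa2 -> 0 < ryu_rate.
Proof.
by move=> k1_gt0 k2_gt0; rewrite divr_gt0 ?lt_min ?k1_gt0 ?mulr_gt0 ?kappa_step_gt0.
Qed.

Hypotheses (gam_le1 : gam <= lam / (2 * L1)) (gam_le2 : gam <= lam / (2 * L2) - al / (2 * e2)).

(* For Dx_i = q_i - p_i and Dg_i = g_i q_i - g_i p_i the variables stand for
   a_i = |Dx_i|^2, b_i = |Dg_i|^2, c_i = <Dx_i, Dg_i>, c12 = <Dx1, Dg2>, m12 = <Dx1, Dx2>,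
   X_i = <u - p_i, Dg_i> and Y_i = <u - p_i, Dx_i>. *)
Lemma kappa_bound (a1 a2 b1 b2 c1 c2 c12 m12 X1 X2 Y1 Y2 : R) :
  0 <= b1 -> 0 <= b2 -> 0 <= c1 <= L1 * a1 -> 0 <= c2 <= L2 * a2 ->
  2 * m12 <= e1 * a1 + a2 / e1 -> - (2 * c12) <= e2 * a1 + b2 / e2 ->
  lam * X1 = c1 + gam * b1 -> lam * Y1 = a1 + gam * c1 ->
  lam * X2 = al * (c2 - c12) + gam * b2 -> lam * Y2 = al * (a2 - m12) + gam * c2 ->
  kappa1 * a1 + kappa2 * a2 <=
    lam * (b1 / (2 * L1) - X1 + (b2 / (2 * L2) - X2)
           + al / (2 * gam) * (2 * Y1 - a1) + (1 - al) / (2 * gam) * (2 * Y2 - a2)).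
Proof.
move=> b1_ge0 b2_ge0 /andP[c1_ge0 c1_le] /andP[c2_ge0 c2_le] young1 young2 X1E Y1E X2E Y2E.
have lamV (x y : R) : lam * x = y -> x = y / lam by move=> <-; field; rewrite gt_eqF.
rewrite (lamV _ _ X1E) (lamV _ _ Y1E) (lamV _ _ X2E) (lamV _ _ Y2E) -subr_ge0.
have -> : lam * (b1 / (2 * L1) - (c1 + gam * b1) / lam
        + (b2 / (2 * L2) - (al * (c2 - c12) + gam * b2) / lam)
      + al / (2 * gam) * (2 * ((a1 + gam * c1) / lam) - a1)
      + (1 - al) / (2 * gam) * (2 * ((al * (a2 - m12) + gam * c2) / lam) - a2))
    - (kappa1 * a1 + kappa2 * a2)
  = b1 * (lam / (2 * L1) - gam) + (1 - al) * (L1 * a1 - c1)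
    + b2 * (lam / (2 * L2) - gam - al / (2 * e2)) + (al * L2 * a2 + (1 - 2 * al) * c2)
    + al / 2 * (2 * c12 + e2 * a1 + b2 / e2)
    + (1 - al) * al / (2 * gam) * (e1 * a1 + a2 / e1 - 2 * m12).
  by rewrite /kappa1 /kappa2; field; rewrite !gt_eqF.
have [al_ge0 al_le1 gam_ge0] : [/\ 0 <= al, al <= 1 & 0 <= gam] by split; exact: ltW.
have P1 : 0 <= b1 * (lam / (2 * L1) - gam) by apply: mulr_ge0; rewrite ?subr_ge0.
have P2 : 0 <= (1 - al) * (L1 * a1 - c1) by apply: mulr_ge0; lra.
have P3 : 0 <= b2 * (lam / (2 * L2) - gam - al / (2 * e2)).
  by apply: mulr_ge0 => //; have := gam_le2; lra.
have P4 : 0 <= al * L2 * a2 + (1 - 2 * al) * c2.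
  have : 0 <= al * (L2 * a2 - c2) by apply: mulr_ge0; lra.
  have : 0 <= (1 - al) * c2 by apply: mulr_ge0; lra.
  lra.
have P5 : 0 <= al / 2 * (2 * c12 + e2 * a1 + b2 / e2) by apply: mulr_ge0; lra.
have P6 : 0 <= (1 - al) * al / (2 * gam) * (e1 * a1 + a2 / e1 - 2 * m12).
  by apply: mulr_ge0; [apply: divr_ge0; nra | lra].
lra.
Qed.

End RyuParameters.

Section RyuEnvelope.
Variables (R : realType) (d : nat).
Local Notation vec := 'rV[R]_d.
Variables (f1 f2 : vec -> R) (g1 g2 : vec -> vec) (f3 : vec -> \bar R).
Variables (L1 L2 lam al gam e1 e2 : R).
Hypotheses (f1_convex : convex_fun f1) (f1_grad : is_gradient f1 g1).
Hypotheses (g1_lip : lipschitz_mod g1 L1) (L1_gt0 : 0 < L1).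
Hypotheses (f2_convex : convex_fun f2) (f2_grad : is_gradient f2 g2).
Hypotheses (g2_lip : lipschitz_mod g2 L2) (L2_gt0 : 0 < L2).
Hypotheses (lam_gt0 : 0 < lam) (al_gt0 : 0 < al) (al_lt1 : al < 1) (gam_gt0 : 0 < gam).
Hypotheses (e1_gt0 : 0 < e1) (e2_gt0 : 0 < e2).
Hypotheses (gam_le1 : gam <= lam / (2 * L1)) (gam_le2 : gam <= lam / (2 * L2) - al / (2 * e2)).

Local Notation k1 := (kappa1 L1 lam al gam e1 e2).
Local Notation k2 := (kappa2 L2 lam al gam e1).

Definition ryu_model (x1 x2 y : vec) : R :=
  f1 x1 + dotv (y - x1) (g1 x1) + sqnorm (y - x1) / (2 * (gam / al))
  + (f2 x2 + dotv (y - x2) (g2 x2) + sqnorm (y - x2) / (2 * (gam / (1 - al)))).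

Let gam_al_gt0 : 0 < gam / al. Proof. exact: divr_gt0. Qed.

Lemma ryu_envE z1 z2 x1 x2 :
  x1 \in prox (fun x => (f1 x)%:E) gam z1 ->
  x2 \in prox (fun x => (f2 x)%:E) (gam / al) (al^-1 *: z2 + x1) ->
  ryu_env f1 f2 f3 g1 g2 gam al z1 z2 =
  ereal_inf [set (f3 y + (ryu_model x1 x2 y)%:E)%E | y in [set: vec]].
Proof.
move=> x1P x2P; rewrite /ryu_env (prox_ptE f1_convex f1_grad g1_lip gam_gt0 x1P).
by rewrite (prox_ptE f2_convex f2_grad g2_lip gam_al_gt0 x2P).
Qed.

Lemma ryu_prox_inv z1 z2 x1 x2 :
  x1 \in prox (fun x => (f1 x)%:E) gam z1 ->
  x2 \in prox (fun x => (f2 x)%:E) (gam / al) (al^-1 *: z2 + x1) ->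
  z1 = x1 + gam *: g1 x1 /\ z2 = al *: (x2 - x1) + gam *: g2 x2.
Proof.
move=> /(prox_gradE f1_grad g1_lip gam_gt0) E1.
move=> /(prox_gradE f2_grad g2_lip gam_al_gt0) /(congr1 (fun v => al *: v)).
rewrite /= scalerBr scalerDr !scalerA mulfV ?gt_eqF // scale1r mulrCA mulfV ?gt_eqF // mulr1.
move=> E2; split; apply/rowP => i; [move/rowP: E1 | move/rowP: E2] => /(_ i); rewrite !mxE; lra.
Qed.

Lemma ryu_model_shift x1 x2 w y y' :
  w = al *: x1 + (1 - al) *: x2 - gam *: (g1 x1 + g2 x2) ->
  ryu_model x1 x2 y - sqnorm (y - w) / (2 * gam)
  = ryu_model x1 x2 y' - sqnorm (y' - w) / (2 * gam).
Proof.
move=> ->; rewrite /ryu_model !sqnormB !dotvBl !dotvBr !dotvDr !dotvZr !dotvDr.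
by field; rewrite !gt_eqF ?subr_gt0.
Qed.

Lemma ryu_env_ge z1 z2 x1 x2 x3 :
  x1 \in prox (fun x => (f1 x)%:E) gam z1 ->
  x2 \in prox (fun x => (f2 x)%:E) (gam / al) (al^-1 *: z2 + x1) ->
  x3 \in prox f3 gam (x1 - z1 + x2 - z2) ->
  (f3 x3 + (ryu_model x1 x2 x3)%:E <= ryu_env f1 f2 f3 g1 g2 gam al z1 z2)%E.
Proof.
move=> x1P x2P /set_mem x3_min; rewrite (ryu_envE x1P x2P).
have [z1E z2E] := ryu_prox_inv x1P x2P.
set w := x1 - z1 + x2 - z2.
have wE : w = al *: x1 + (1 - al) *: x2 - gam *: (g1 x1 + g2 x2).
  by rewrite /w z1E z2E; apply/rowP => i; rewrite !mxE; lra.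
apply: le_ereal_inf_tmp => _ [y _ <-].
set c := ryu_model x1 x2 x3 - sqnorm (x3 - w) / (2 * gam).
have := leeD2r c%:E (x3_min y); rewrite -!addeA -!EFinD.
by rewrite /c subrKC (ryu_model_shift x3 y wE) subrKC.
Qed.

Lemma ryu_env_le z1 z2 x1 x2 y :
  x1 \in prox (fun x => (f1 x)%:E) gam z1 ->
  x2 \in prox (fun x => (f2 x)%:E) (gam / al) (al^-1 *: z2 + x1) ->
  (ryu_env f1 f2 f3 g1 g2 gam al z1 z2 <= f3 y + (ryu_model x1 x2 y)%:E)%E.
Proof. by move=> x1P x2P; rewrite (ryu_envE x1P x2P); apply: ereal_inf_lbound; exists y. Qed.

Lemma ryu_model_sub_ge p1 p2 q1 q2 u :
  sqnorm (g1 q1 - g1 p1) / (2 * L1) - dotv (u - p1) (g1 q1 - g1 p1)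
  + (sqnorm (g2 q2 - g2 p2) / (2 * L2) - dotv (u - p2) (g2 q2 - g2 p2))
  + al / (2 * gam) * (2 * dotv (u - p1) (q1 - p1) - sqnorm (q1 - p1))
  + (1 - al) / (2 * gam) * (2 * dotv (u - p2) (q2 - p2) - sqnorm (q2 - p2))
  <= ryu_model p1 p2 u - ryu_model q1 q2 u.
Proof.
have sqnorm_sub (p q : vec) :
    sqnorm (u - p) - sqnorm (u - q) = 2 * dotv (u - p) (q - p) - sqnorm (q - p).
  have -> : u - q = (u - p) - (q - p) by rewrite opprB addrA subrK.
  by rewrite (sqnormB (u - p)); ring.
rewrite -!sqnorm_sub.
have := linearization_sub_ge f1_convex f1_grad g1_lip L1_gt0 p1 q1 u.
have := linearization_sub_ge f2_convex f2_grad g2_lip L2_gt0 p2 q2 u.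
have E1 (b : R) : b / (2 * (gam / al)) = al / (2 * gam) * b.
  by field; rewrite !gt_eqF.
have E2 (b : R) : b / (2 * (gam / (1 - al))) = (1 - al) / (2 * gam) * b.
  by field; rewrite !gt_eqF ?subr_gt0.
rewrite /ryu_model !E1 !E2; lra.
Qed.

Lemma ryu_step_sqnorm_le p1 p2 q1 q2 :
  sqnorm ((q1 - p1) + gam *: (g1 q1 - g1 p1))
  + sqnorm (al *: ((q2 - p2) - (q1 - p1)) + gam *: (g2 q2 - g2 p2))
  <= kappa_step L1 L2 gam * (sqnorm (q1 - p1) + sqnorm (q2 - p2)).
Proof.
have := sqnormD_le (q1 - p1) (gam *: (g1 q1 - g1 p1)).
have := sqnormD_le (al *: ((q2 - p2) - (q1 - p1))) (gam *: (g2 q2 - g2 p2)).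
have := sqnormD_le (q2 - p2) (- (q1 - p1)).
rewrite !sqnormZ sqnormN /kappa_step.
have [A_ge0 B_ge0] := (sqnorm_ge0 (q1 - p1), sqnorm_ge0 (q2 - p2)).
have lip1 := ler_wpM2l (sqr_ge0 gam) (sqnorm_lip g1_lip L1_gt0 q1 p1).
have lip2 := ler_wpM2l (sqr_ge0 gam) (sqnorm_lip g2_lip L2_gt0 q2 p2).
have al_sq : al ^+ 2 * sqnorm (q2 - p2 - (q1 - p1)) <= sqnorm (q2 - p2 - (q1 - p1)).
  by rewrite ler_piMl ?sqnorm_ge0 // expr_le1 ?ltW.
have cross1 : 0 <= gam ^+ 2 * L1 ^+ 2 * sqnorm (q2 - p2).
  by apply: mulr_ge0 => //; apply: mulr_ge0; exact: sqr_ge0.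
have cross2 : 0 <= gam ^+ 2 * L2 ^+ 2 * sqnorm (q1 - p1).
  by apply: mulr_ge0 => //; apply: mulr_ge0; exact: sqr_ge0.
lra.
Qed.

Lemma ryu_model_sub_kappa p1 p2 q1 q2 u :
  lam *: (u - p1) = (q1 - p1) + gam *: (g1 q1 - g1 p1) ->
  lam *: (u - p2) = al *: ((q2 - p2) - (q1 - p1)) + gam *: (g2 q2 - g2 p2) ->
  k1 * sqnorm (q1 - p1) + k2 * sqnorm (q2 - p2)
    <= lam * (ryu_model p1 p2 u - ryu_model q1 q2 u).
Proof.
set d1 := q1 - p1; set d2 := q2 - p2; set h1 := g1 q1 - g1 p1; set h2 := g2 q2 - g2 p2.
move=> W1 W2.
have c1_bounds : 0 <= dotv d1 h1 <= L1 * sqnorm d1.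
  by rewrite (grad_monotone f1_convex f1_grad g1_lip) (dotv_grad_le g1_lip).
have c2_bounds : 0 <= dotv d2 h2 <= L2 * sqnorm d2.
  by rewrite (grad_monotone f2_convex f2_grad g2_lip) (dotv_grad_le g2_lip).
have young2 : - (2 * dotv d1 h2) <= e2 * sqnorm d1 + sqnorm h2 / e2.
  by have := young_dotv d1 (- h2) e2_gt0; rewrite dotvNr sqnormN mulrN.
have X1E : lam * dotv (u - p1) h1 = dotv d1 h1 + gam * sqnorm h1.
  by rewrite -dotvZl W1 dotvDl dotvZl.
have Y1E : lam * dotv (u - p1) d1 = sqnorm d1 + gam * dotv d1 h1.
  by rewrite -dotvZl W1 dotvDl dotvZl (dotvC h1).
have X2E : lam * dotv (u - p2) h2 = al * (dotv d2 h2 - dotv d1 h2) + gam * sqnorm h2.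
  by rewrite -dotvZl W2 dotvDl !dotvZl dotvBl.
have Y2E : lam * dotv (u - p2) d2 = al * (sqnorm d2 - dotv d1 d2) + gam * dotv d2 h2.
  by rewrite -dotvZl W2 dotvDl !dotvZl dotvBl (dotvC h2).
apply: le_trans (kappa_bound L1_gt0 L2_gt0 lam_gt0 al_gt0 al_lt1 gam_gt0 e1_gt0 e2_gt0
  gam_le1 gam_le2 (sqnorm_ge0 h1) (sqnorm_ge0 h2) c1_bounds c2_bounds
  (young_dotv d1 d2 e1_gt0) young2 X1E Y1E X2E Y2E) _.
by rewrite ler_pM2l // ryu_model_sub_ge.
Qed.

Lemma ryu_model_decrease z1 z2 z1' z2' p1 p2 q1 q2 u :
  0 < k1 -> 0 < k2 ->
  z1 = p1 + gam *: g1 p1 -> z2 = al *: (p2 - p1) + gam *: g2 p2 ->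
  z1' = q1 + gam *: g1 q1 -> z2' = al *: (q2 - q1) + gam *: g2 q2 ->
  z1' = z1 + lam *: (u - p1) -> z2' = z2 + lam *: (u - p2) ->
  ryu_model q1 q2 u + ryu_rate L1 L2 lam al gam e1 e2 * (sqnorm (z1' - z1) + sqnorm (z2' - z2))
    <= ryu_model p1 p2 u.
Proof.
move=> k1_gt0 k2_gt0 z1E z2E z1E' z2E' step1 step2.
have Dz1 : z1' - z1 = lam *: (u - p1) by rewrite step1 addrC addKr.
have Dz2 : z2' - z2 = lam *: (u - p2) by rewrite step2 addrC addKr.
have W1 : lam *: (u - p1) = (q1 - p1) + gam *: (g1 q1 - g1 p1).
  by rewrite -Dz1 z1E z1E'; apply/rowP => i; rewrite !mxE; lra.
have W2 : lam *: (u - p2) = al *: ((q2 - p2) - (q1 - p1)) + gam *: (g2 q2 - g2 p2).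
  by rewrite -Dz2 z2E z2E'; apply/rowP => i; rewrite !mxE; lra.
have steps := ryu_step_sqnorm_le p1 p2 q1 q2; rewrite -W1 -W2 -Dz1 -Dz2 in steps.
set a := sqnorm (q1 - p1) + sqnorm (q2 - p2) in steps.
have min_le : Num.min k1 k2 * a <= k1 * sqnorm (q1 - p1) + k2 * sqnorm (q2 - p2).
  by rewrite mulrDr lerD // ler_wpM2r ?sqnorm_ge0 // ge_min lexx ?orbT.
have rate_step : ryu_rate L1 L2 lam al gam e1 e2 * (kappa_step L1 L2 gam * a)
    = Num.min k1 k2 * a / lam.
  by rewrite /ryu_rate; field; rewrite !gt_eqF ?kappa_step_gt0.
suff : ryu_rate L1 L2 lam al gam e1 e2 * (sqnorm (z1' - z1) + sqnorm (z2' - z2))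
    <= ryu_model p1 p2 u - ryu_model q1 q2 u by lra.
apply: le_trans (ler_wpM2l (ltW (ryu_rate_gt0 lam_gt0 k1_gt0 k2_gt0)) steps) _.
rewrite rate_step ler_pdivrMr // [_ * lam]mulrC.
exact: le_trans min_le (ryu_model_sub_kappa W1 W2).
Qed.

End RyuEnvelope.

Theorem theorem1 (R : realType) (d : nat)
  (f1 f2 : 'rV[R]_d -> R) (g1 g2 : 'rV[R]_d -> 'rV[R]_d)
  (f3 : 'rV[R]_d -> \bar R) (L1 L2 : R)
  (lam alpha eps1 eps2 gam : R)
  (z1 z2 x1 x2 x3 : nat -> 'rV[R]_d) :
  convex_fun f1 -> convex_fun f2 ->
  is_gradient f1 g1 -> is_gradient f2 g2 ->
  0 < L1 -> 0 < L2 -> lipschitz_mod g1 L1 -> lipschitz_mod g2 L2 ->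
  proper_fun f3 -> lower_semicontinuous f3 ->
  (exists xs : 'rV[R]_d, forall y : 'rV[R]_d,
     ((f1 xs + f2 xs)%:E + f3 xs <= (f1 y + f2 y)%:E + f3 y)%E) ->
  0 < lam < 2 ->
  (2 * lam - 3 + Num.sqrt (9 - 4 * lam)) / 2 < alpha < 1 ->
  alpha / (2 * alpha - lam) < eps1 < (2 - lam) / (1 - alpha) ->
  alpha * L2 / lam < eps2 ->
  stepsize_set L1 L2 lam alpha eps1 eps2 gam ->
  (forall k, x1 k \in prox (fun x => (f1 x)%:E) gam (z1 k)) ->
  (forall k, x2 k \in prox (fun x => (f2 x)%:E) (gam / alpha)
                        (alpha^-1 *: z2 k + x1 k)) ->
  (forall k, x3 k \in prox f3 gam (x1 k - z1 k + x2 k - z2 k)) ->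
  (forall k, z1 k.+1 = z1 k + lam *: (x3 k - x1 k)) ->
  (forall k, z2 k.+1 = z2 k + lam *: (x3 k - x2 k)) ->
  exists M : R, 0 < M /\ forall k : nat,
    (ryu_env f1 f2 f3 g1 g2 gam alpha (z1 k) (z2 k) >=
     ryu_env f1 f2 f3 g1 g2 gam alpha (z1 k.+1) (z2 k.+1)
       + (M * (sqnorm (z1 k.+1 - z1 k) + sqnorm (z2 k.+1 - z2 k)))%:E)%E.
Proof.
(* Properness, lower semicontinuity and the existence of a minimizer only serve to make
   the iteration well defined; here the iterates x3 k are given. *)
move=> f1_convex f2_convex f1_grad f2_grad L1_gt0 L2_gt0 g1_lip g2_lip _ _ _
  /andP[lam_gt0 lam_lt2] /andP[al_lo al_lt1] /andP[e1_lo _] e2_lo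
  [gam_gt0 [+ +]] x1P x2P x3P z1_step z2_step.
rewrite le_min !lt_min => /andP[gam_le1 gam_le2] /andP[/andP[gam_lt2 gam_lt3] _].
have lam_lt := lam_lt_twice_alpha lam_gt0 lam_lt2 al_lo.
have al_gt0 : 0 < alpha by lra.
have e1_gt0 : 0 < eps1 by apply: lt_trans e1_lo; rewrite divr_gt0 // subr_gt0.
have e2_gt0 : 0 < eps2 by apply: lt_trans e2_lo; rewrite !divr_gt0 ?mulr_gt0.
have k1_gt0 := kappa1_gt0 L1_gt0 al_gt0 al_lt1 gam_gt0 e2_gt0 gam_lt2.
have k2_gt0 := kappa2_gt0 L2_gt0 al_gt0 gam_gt0 e1_gt0 gam_lt3.
exists (ryu_rate L1 L2 lam alpha gam eps1 eps2); split; first exact: ryu_rate_gt0.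
move=> k.
have [z1E z2E] := ryu_prox_inv f1_grad g1_lip f2_grad g2_lip al_gt0 gam_gt0 (x1P k) (x2P k).
have [z1E' z2E'] :=
  ryu_prox_inv f1_grad g1_lip f2_grad g2_lip al_gt0 gam_gt0 (x1P k.+1) (x2P k.+1).
apply: le_trans (ryu_env_ge f1_convex f1_grad g1_lip f2_convex f2_grad g2_lip
  al_gt0 al_lt1 gam_gt0 (x1P k) (x2P k) (x3P k)).
apply: le_trans (leeD2r _ (ryu_env_le f3 f1_convex f1_grad g1_lip f2_convex f2_grad g2_lip
  al_gt0 gam_gt0 (x3 k) (x1P k.+1) (x2P k.+1))) _.
rewrite -addeA -EFinD; apply: leeD2l; rewrite lee_fin.
exact: (ryu_model_decrease f1_convex f1_grad g1_lip L1_gt0 f2_convex f2_grad g2_lip L2_gt0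
  lam_gt0 al_gt0 al_lt1 gam_gt0 e1_gt0 e2_gt0 gam_le1 gam_le2 k1_gt0 k2_gt0).
Qed.
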